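(* For $n\ge1$ let $\widehat x^n(t):=\sum_{m=0}^{n-1}\sum_{k=0}^{2^m-1}e_{m,k}(t)$, $t\in[0,1]$, let $J_n:=\frac13(2^n-(-1)^n)$ (the Jacobsthal numbers), and let $$M_n:=\frac13\Big(2+\sqrt2+(-1)^{n+1}2^{-n}(\sqrt2-1)\Big)-2^{-n/2}.$$ Then $\widehat x^n$ has exactly two maximal points on $[0,1]$, namely $t_n^-:=2^{-n}J_n\in[0,1/2]$ and $t_n^+:=1-t_n^-\in[1/2,1]$, and $$\max_{t\in[0,1]}\widehat x^n(t)=\widehat x^n(t_n^-)=\widehat x^n(t_n^+)=M_n.$$
   Context: The Faber--Schauder functions are $e_{0,0}(t):=(\min\{t,1-t\})^+$ and $e_{m,k}(t):=2^{-m/2}e_{0,0}(2^m t-k)$ for $t\in\mathbb R$, $m\ge1$, $k\in\mathbb Z$. *)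

From Stdlib Require Import Reals Lra Lia List.
Open Scope R_scope.

Definition fsum (f : nat -> R) (N : nat) : R :=
  fold_right Rplus 0 (map f (seq 0 N)).

Definition e00 (t : R) : R := Rmax (Rmin t (1 - t)) 0.

Definition emk (m k : nat) (t : R) : R :=
  Rpower 2 (- INR m / 2) * e00 (2 ^ m * t - INR k).

Definition xhat (n : nat) (t : R) : R :=
  fsum (fun m => fsum (fun k => emk m k t) (2 ^ m)%nat) n.

Definition Jac (n : nat) : R := (2 ^ n - (-1) ^ n) / 3.

Definition tminus (n : nat) : R := / 2 ^ n * Jac n.
Definition tplus (n : nat) : R := 1 - tminus n.

Definition Mn (n : nat) : R :=
  (2 + sqrt 2 + (-1) ^ (n + 1) * / 2 ^ n * (sqrt 2 - 1)) / 3
  - Rpower 2 (- INR n / 2).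

From Stdlib Require Import Reals Lra Lia List.
Open Scope R_scope.

(* On [0,1/2] the Schauder sum is self-similar, x^{n+1}(t) = t + x^n(2t)/sqrt 2,
   and x^n is symmetric about 1/2.  Composing two levels maps [0,1] affinely onto
   each quarter of [0,1/2], and this carries the invariant "on [0,1/2], x^n lies
   below the tent of slope sqrt 2 - 1 with apex (t_n^-, M_n)" from n to n + 2,
   because t_{n+2}^- = (t_n^- + 1)/4 and
   M_{n+2} = 1/sqrt 2 + (1 - sqrt 2) t_{n+2}^- + M_n/2.
   The tent bounds x^n by M_n, and since it is strict away from the apex, the
   maximum is attained only at t_n^- and its mirror image 1 - t_n^-. *)

Lemma fsum_S f N : fsum f (S N) = f 0%nat + fsum (fun i => f (S i)) N.
Proof. unfold fsum; simpl; now rewrite <- seq_shift, map_map. Qed.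

Lemma fsum_add f a b :
  fsum f (a + b) = fsum f a + fsum (fun i => f (a + i)%nat) b.
Proof.
  revert f; induction a as [|a IH]; intros f; simpl.
  - change (fsum f 0) with 0; now rewrite Rplus_0_l.
  - rewrite !fsum_S, IH; ring.
Qed.

Lemma fsum_ext f g N :
  (forall i, (i < N)%nat -> f i = g i) -> fsum f N = fsum g N.
Proof.
  revert f g; induction N as [|N IH]; intros f g Hfg; [reflexivity|].
  rewrite !fsum_S, Hfg by lia; f_equal; apply IH; intros; apply Hfg; lia.
Qed.

Lemma fsum_plus f g N : fsum (fun i => f i + g i) N = fsum f N + fsum g N.
Proof.
  revert f g; induction N as [|N IH]; intros f g; [unfold fsum; simpl; ring|].
  rewrite !fsum_S, IH; ring.
Qed.

Lemma fsum_scal_l c f N : fsum (fun i => c * f i) N = c * fsum f N.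
Proof.
  revert f; induction N as [|N IH]; intros f; [unfold fsum; simpl; ring|].
  rewrite !fsum_S, IH; ring.
Qed.

Lemma fsum_eq0 f N : (forall i, (i < N)%nat -> f i = 0) -> fsum f N = 0.
Proof.
  intros Hf; rewrite (fsum_ext f (fun i => 0 * f i)).
  - rewrite fsum_scal_l; ring.
  - intros i Hi; rewrite Hf; [ring | exact Hi].
Qed.

Lemma e00_le0 x : x <= 0 -> e00 x = 0.
Proof. intros; unfold e00, Rmax, Rmin; repeat destruct Rle_dec; lra. Qed.

Lemma e00_left x : 0 <= x <= 1 / 2 -> e00 x = x.
Proof. intros; unfold e00, Rmax, Rmin; repeat destruct Rle_dec; lra. Qed.

Lemma e00_1m x : e00 (1 - x) = e00 x.
Proof. unfold e00; rewrite Rmin_comm; do 2 f_equal; ring. Qed.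

Lemma sqrt2_sq : sqrt 2 * sqrt 2 = 2.
Proof. apply sqrt_sqrt; lra. Qed.

Lemma sqrt2_bounds : 1.4 < sqrt 2 < 1.5.
Proof. pose proof sqrt2_sq; pose proof (sqrt_pos 2); split; nra. Qed.

Lemma div_sqrt2 x : x / sqrt 2 = sqrt 2 / 2 * x.
Proof.
  pose proof sqrt2_bounds; pose proof sqrt2_sq.
  apply (Rmult_eq_reg_r (sqrt 2)); [|lra].
  unfold Rdiv; rewrite Rmult_assoc, Rinv_l by lra.
  transitivity (sqrt 2 * sqrt 2 * x / 2); [rewrite sqrt2_sq; field | field].
Qed.

Lemma div_sqrt2_twice x : x / sqrt 2 / sqrt 2 = x / 2.
Proof.
  pose proof sqrt2_bounds; unfold Rdiv; rewrite Rmult_assoc, <- Rinv_mult, sqrt2_sq.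
  reflexivity.
Qed.

Lemma Rpower2_neg_half_S m :
  Rpower 2 (- INR (S m) / 2) = Rpower 2 (- INR m / 2) / sqrt 2.
Proof.
  replace (- INR (S m) / 2) with (- INR m / 2 + - / 2) by (rewrite S_INR; field).
  rewrite Rpower_plus, Rpower_Ropp, Rpower_sqrt by lra; reflexivity.
Qed.

Lemma emk_S m k t : emk (S m) k t = emk m k (2 * t) / sqrt 2.
Proof.
  unfold emk; rewrite Rpower2_neg_half_S; simpl pow.
  replace (2 * 2 ^ m * t) with (2 ^ m * (2 * t)) by ring; unfold Rdiv; ring.
Qed.

Lemma emk_S_shift m k t :
  emk (S m) (2 ^ m + k) t = emk m k (2 * t - 1) / sqrt 2.
Proof.
  rewrite emk_S; unfold emk; rewrite plus_INR, pow_INR; simpl INR.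
  do 3 f_equal; replace (1 + 1) with 2 by ring; ring.
Qed.

Lemma emk_le0 m k s : s <= 0 -> emk m k s = 0.
Proof.
  intros Hs; unfold emk; rewrite e00_le0; [ring|].
  pose proof (pos_INR k); pose proof (pow_lt 2 m ltac:(lra)); nra.
Qed.

Lemma schauder_level_S m t :
  fsum (fun k => emk (S m) k t) (2 ^ S m) =
  (fsum (fun k => emk m k (2 * t)) (2 ^ m) +
   fsum (fun k => emk m k (2 * t - 1)) (2 ^ m)) / sqrt 2.
Proof.
  replace (2 ^ S m)%nat with (2 ^ m + 2 ^ m)%nat by (simpl; lia).
  rewrite fsum_add; unfold Rdiv; rewrite Rmult_plus_distr_r, <- !(Rmult_comm (/ sqrt 2)).
  rewrite <- !fsum_scal_l; f_equal; apply fsum_ext; intros k _.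
  - rewrite emk_S; unfold Rdiv; ring.
  - rewrite emk_S_shift; unfold Rdiv; ring.
Qed.

Lemma xhat_S n t :
  xhat (S n) t = e00 t + (xhat n (2 * t) + xhat n (2 * t - 1)) / sqrt 2.
Proof.
  unfold xhat at 1; rewrite fsum_S; f_equal.
  - unfold fsum, emk; simpl.
    replace (- 0 / 2) with 0 by field; rewrite Rpower_O by lra.
    replace (1 * t - 0) with t by ring; ring.
  - unfold xhat, Rdiv; rewrite Rmult_comm, <- fsum_plus, <- fsum_scal_l.
    apply fsum_ext; intros m _; rewrite schauder_level_S; unfold Rdiv; ring.
Qed.

Lemma xhat_0 t : xhat 0 t = 0.
Proof. reflexivity. Qed.

Lemma xhat_le0 n s : s <= 0 -> xhat n s = 0.
Proof.
  intros Hs; apply fsum_eq0; intros m _; apply fsum_eq0; intros k _.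
  now apply emk_le0.
Qed.

Lemma xhat_1m n t : xhat n (1 - t) = xhat n t.
Proof.
  revert t; induction n as [|n IH]; intros t; [reflexivity|].
  rewrite !xhat_S, e00_1m.
  replace (2 * (1 - t) - 1) with (1 - 2 * t) by ring.
  replace (2 * (1 - t)) with (1 - (2 * t - 1)) by ring.
  rewrite !IH; unfold Rdiv; ring.
Qed.

Lemma xhat_left n t :
  0 <= t <= 1 / 2 -> xhat (S n) t = t + xhat n (2 * t) / sqrt 2.
Proof.
  intros Ht; rewrite xhat_S, e00_left, (xhat_le0 n (2 * t - 1)), Rplus_0_r by lra.
  reflexivity.
Qed.

Lemma xhat_right n t :
  1 / 2 <= t <= 1 -> xhat (S n) t = 1 - t + xhat n (2 * t - 1) / sqrt 2.
Proof.
  intros Ht; rewrite <- xhat_1m, xhat_left by lra.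
  replace (2 * (1 - t)) with (1 - (2 * t - 1)) by ring; now rewrite xhat_1m.
Qed.

Lemma xhat_SS_first_quarter n t : 0 <= t <= 1 / 4 ->
  xhat (S (S n)) t = (1 + sqrt 2) * t + xhat n (4 * t) / 2.
Proof.
  intros Ht; rewrite xhat_left, xhat_left by lra.
  rewrite Rdiv_plus_distr, div_sqrt2_twice, div_sqrt2.
  replace (2 * (2 * t)) with (4 * t) by ring; field.
Qed.

Lemma xhat_SS_second_quarter n t : 1 / 4 <= t <= 1 / 2 ->
  xhat (S (S n)) t = t + sqrt 2 / 2 * (1 - 2 * t) + xhat n (4 * t - 1) / 2.
Proof.
  intros Ht; rewrite xhat_left, xhat_right by lra.
  rewrite Rdiv_plus_distr, div_sqrt2_twice, div_sqrt2.
  replace (2 * (2 * t) - 1) with (4 * t - 1) by ring; ring.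
Qed.

Lemma tminus_S n : tminus (S n) = (1 - tminus n) / 2.
Proof. unfold tminus, Jac; simpl; pose proof (pow_lt 2 n ltac:(lra)); field; lra. Qed.

Lemma tminus_SS n : tminus (S (S n)) = (tminus n + 1) / 4.
Proof. rewrite !tminus_S; field. Qed.

Lemma tminus_bounds n : 0 <= tminus n <= 1 / 2.
Proof.
  induction n as [|n IH].
  - unfold tminus, Jac; simpl; lra.
  - rewrite tminus_S; lra.
Qed.

Lemma tminus_SS_lt_half n : tminus (S (S n)) < 1 / 2.
Proof. rewrite tminus_SS; pose proof (tminus_bounds n); lra. Qed.

Lemma Mn_SS n :
  Mn (S (S n)) = sqrt 2 / 2 + (1 - sqrt 2) * tminus (S (S n)) + Mn n / 2.
Proof.
  unfold Mn; rewrite !Rpower2_neg_half_S, div_sqrt2_twice, tminus_SS.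
  unfold tminus, Jac; rewrite !pow_add; simpl.
  pose proof (pow_lt 2 n ltac:(lra)); field; lra.
Qed.

Lemma tminus_1 : tminus 1 = 1 / 2.
Proof. unfold tminus, Jac; simpl; field. Qed.

Lemma Mn_1 : Mn 1 = 1 / 2.
Proof.
  unfold Mn; rewrite Rpower2_neg_half_S, div_sqrt2; simpl.
  replace (- 0 / 2) with 0 by field; rewrite Rpower_O by lra; field.
Qed.

Lemma tminus_2 : tminus 2 = 1 / 4.
Proof. rewrite tminus_S, tminus_1; field. Qed.

Lemma Mn_2 : Mn 2 = (1 + sqrt 2) / 4.
Proof.
  unfold Mn; rewrite !Rpower2_neg_half_S, div_sqrt2_twice; simpl.
  replace (- 0 / 2) with 0 by field; rewrite Rpower_O by lra; field.
Qed.

Definition peak_at (n : nat) (p M : R) : Prop :=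
  xhat n p = M /\
  forall s, 0 <= s <= 1 / 2 -> xhat n s + (sqrt 2 - 1) * Rabs (s - p) <= M.

Section PeakAt.

Variables (n : nat) (p M : R).
Hypothesis Hpeak : peak_at n p M.

Lemma peak_at_fold s : 0 <= s <= 1 ->
  xhat n s + (sqrt 2 - 1) * Rabs (Rmin s (1 - s) - p) <= M.
Proof.
  intros Hs; unfold Rmin; destruct Rle_dec.
  - apply Hpeak; lra.
  - rewrite <- xhat_1m; apply Hpeak; lra.
Qed.

Lemma peak_at_le s : 0 <= s <= 1 -> xhat n s <= M.
Proof.
  intros Hs; pose proof (peak_at_fold s Hs); pose proof sqrt2_bounds.
  pose proof (Rabs_pos (Rmin s (1 - s) - p)); nra.
Qed.

Lemma peak_at_le_left s : 0 <= s <= 1 -> xhat n s <= M - (sqrt 2 - 1) * (p - s).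
Proof.
  intros Hs; pose proof (peak_at_fold s Hs); pose proof sqrt2_bounds.
  assert (p - s <= Rabs (Rmin s (1 - s) - p)).
  { pose proof (Rmin_l s (1 - s)).
    pose proof (Rle_abs (p - Rmin s (1 - s))) as Habs.
    rewrite Rabs_minus_sym in Habs; lra. }
  nra.
Qed.

Lemma peak_at_le_shift s : 0 <= s <= 1 -> xhat n s + s <= M + 1 - (sqrt 2 - 1) * p.
Proof.
  intros Hs; pose proof (peak_at_fold s Hs); pose proof sqrt2_bounds.
  assert (Hfold : (sqrt 2 - 1) * Rmin s (1 - s) <= 1 - s).
  { unfold Rmin; destruct Rle_dec; nra. }
  pose proof (Rle_abs (p - Rmin s (1 - s))) as Habs; rewrite Rabs_minus_sym in Habs; nra.
Qed.

Lemma peak_at_eq s : 0 <= s <= 1 -> xhat n s = M -> Rmin s (1 - s) = p.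
Proof.
  intros Hs Heq; pose proof (peak_at_fold s Hs); pose proof sqrt2_bounds.
  assert (Rabs (Rmin s (1 - s) - p) <= 0).
  { apply (Rmult_le_reg_l (sqrt 2 - 1)); lra. }
  pose proof (Rle_abs (Rmin s (1 - s) - p)).
  pose proof (Rle_abs (p - Rmin s (1 - s))) as Habs; rewrite Rabs_minus_sym in Habs; lra.
Qed.

End PeakAt.

Lemma peak_at_SS n p M : 0 <= p <= 1 -> peak_at n p M ->
  peak_at (S (S n)) ((p + 1) / 4) (sqrt 2 / 2 + (1 - sqrt 2) * ((p + 1) / 4) + M / 2).
Proof.
  intros Hp Hpeak; pose proof sqrt2_bounds; split.
  - rewrite xhat_SS_second_quarter by lra.
    replace (4 * ((p + 1) / 4) - 1) with p by field.
    rewrite (proj1 Hpeak); field.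
  - intros t Ht; destruct (Rle_dec t (1 / 4)).
    + rewrite xhat_SS_first_quarter, Rabs_left1 by lra.
      pose proof (peak_at_le_shift n p M Hpeak (4 * t)); lra.
    + rewrite xhat_SS_second_quarter by lra; destruct (Rle_dec t ((p + 1) / 4)).
      * rewrite Rabs_left1 by lra.
        pose proof (peak_at_le_left n p M Hpeak (4 * t - 1)); lra.
      * rewrite Rabs_right by lra.
        pose proof (peak_at_le n p M Hpeak (4 * t - 1)); lra.
Qed.

Lemma peak_at_1 : peak_at 1 (1 / 2) (1 / 2).
Proof.
  pose proof sqrt2_bounds; split.
  - rewrite xhat_left, xhat_0 by lra; lra.
  - intros s Hs; rewrite xhat_left, xhat_0, Rabs_left1 by lra.
    assert (0 <= (2 - sqrt 2) * (1 / 2 - s)) by (apply Rmult_le_pos; lra); lra.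
Qed.

Lemma peak_at_2 : peak_at 2 (1 / 4) ((1 + sqrt 2) / 4).
Proof.
  pose proof sqrt2_bounds; split.
  - rewrite xhat_SS_second_quarter, xhat_0 by lra; field.
  - intros s Hs; destruct (Rle_dec s (1 / 4)).
    + rewrite xhat_SS_first_quarter, xhat_0, Rabs_left1 by lra; lra.
    + rewrite xhat_SS_second_quarter, xhat_0, Rabs_right by lra; lra.
Qed.

Lemma peak_at_tminus n : (1 <= n)%nat -> peak_at n (tminus n) (Mn n).
Proof.
  assert (Hpair : forall m, peak_at (S m) (tminus (S m)) (Mn (S m)) /\
                            peak_at (S (S m)) (tminus (S (S m))) (Mn (S (S m)))).
  { induction m as [|m [IH1 IH2]].
    - rewrite tminus_1, Mn_1, tminus_2, Mn_2; split; [exact peak_at_1 | exact peak_at_2].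
    - split; [exact IH2|].
      rewrite Mn_SS, tminus_SS; apply peak_at_SS; [|exact IH1].
      pose proof (tminus_bounds (S m)); lra. }
  intros Hn; destruct n as [|m]; [lia | apply Hpair].
Qed.

Theorem lemma3p1 (n : nat) (hn : (1 <= n)%nat) :
  (0 <= tminus n <= 1 / 2) /\ (1 / 2 <= tplus n <= 1) /\
  xhat n (tminus n) = Mn n /\ xhat n (tplus n) = Mn n /\
  (forall t, 0 <= t <= 1 -> xhat n t <= Mn n) /\
  (forall t, 0 <= t <= 1 -> xhat n t = Mn n -> t = tminus n \/ t = tplus n) /\
  ((2 <= n)%nat -> tminus n <> tplus n).
Proof.
  pose proof (tminus_bounds n) as Ht; pose proof (peak_at_tminus n hn) as Hpeak.
  unfold tplus; split; [exact Ht|]; split; [lra|].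
  split; [exact (proj1 Hpeak)|]; split; [rewrite xhat_1m; exact (proj1 Hpeak)|].
  split; [exact (peak_at_le _ _ _ Hpeak)|]; split.
  - intros t Ht' Heq; pose proof (peak_at_eq _ _ _ Hpeak t Ht' Heq) as Hfold.
    unfold Rmin in Hfold; destruct Rle_dec; [left | right]; lra.
  - intros H2; destruct n as [|[|m]]; [lia | lia |].
    pose proof (tminus_SS_lt_half m); lra.
Qed.
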